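(* Let $\phi$ be a norm-to-weak continuous cocycle with respect to $\theta$ on $\mathbb{R}^+\times\Sigma\times X$ such that $(\phi,\theta)$ has a nested bounded pullback absorbing set. Then the following are equivalent: (a) $(\phi,\theta)$ has a pullback attractor; (b) $\phi$ is pullback $\kappa$-contracting; (c) $\phi$ is pullback asymptotically compact.
   Context: Let $X$ be a Banach space with norm $\|\cdot\|$. Let $\Sigma$ be a set and $\theta=\{\theta_t\}_{t\in\mathbb{R}}$ a group of bijections $\theta_t:\Sigma\to\Sigma$ with $\theta_0=\mathrm{id}$ and $\theta_{t+\tau}=\theta_t\circ\theta_\tau$. A cocycle with respect to $\theta$ is a map $\phi:\mathbb{R}^+\times\Sigma\times X\to X$ with $\phi(0,\sigma;x)=x$ and $\phi(s+t,\sigma;x)=\phi(s,\theta_t(\sigma);\phi(t,\sigma;x))$ for all $s,t\ge 0$; it is norm-to-weak continuous if for each $t\ge0$, $\sigma\in\Sigma$, $x_n\to x$ in norm implies $\phi(t,\sigma;x_n)\rightharpoonup\phi(t,\sigma;x)$ weakly in $X$. For $B\subset X$, $\phi(t,\sigma;B)=\{\phi(t,\sigma;x):x\in B\}$, and $\mathrm{dist}_X(A,C)=\sup_{a\in A}\inf_{c\in C}\|a-c\|$. A bounded pullback absorbing set is a family $\{B_\sigma\}_{\sigma\in\Sigma}$ of bounded subsets of $X$ such that for every $\sigma$ and bounded $B\subset X$ there is $T\ge0$ with $\phi(t,\theta_{-t}(\sigma);B)\subset B_\sigma$ for all $t\ge T$; it is nested if moreover $B_{\theta_{-t}(\sigma)}\subset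 B_\sigma$ for all $t\ge0$, $\sigma\in\Sigma$. A pullback attractor is a family $\{\mathcal{A}_\sigma\}_{\sigma\in\Sigma}$ of nonempty compact sets with $\phi(t,\sigma;\mathcal{A}_\sigma)=\mathcal{A}_{\theta_t(\sigma)}$ for all $t\ge0$, $\sigma$, and $\lim_{t\to+\infty}\mathrm{dist}_X(\phi(t,\theta_{-t}(\sigma);B),\mathcal{A}_\sigma)=0$ for every $\sigma$ and bounded $B$. The Kuratowski measure $\kappa(A)=\inf\{\delta>0: A$ has a finite cover by sets of diameter $<\delta\}$; $\phi$ is pullback $\kappa$-contracting if for all $\varepsilon>0$, $\sigma$, bounded $B$ there is $T$ with $\kappa(\phi(t,\theta_{-t}(\sigma);B))\le\varepsilon$ for $t\ge T$. $\phi$ is pullback asymptotically compact if for each $\sigma\in\Sigma$, every bounded sequence $\{x_n\}\subset X$ and every $\{t_n\}\subset\mathbb{R}^+$ with $t_n\to+\infty$, the sequence $\{\phi(t_n,\theta_{-t_n}(\sigma);x_n)\}$ is precompact in $X$. *)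

From HB Require Import structures.
From mathcomp Require Import all_boot all_order all_algebra.
From mathcomp Require Import all_classical all_reals all_analysis.
Set Implicit Arguments. Unset Strict Implicit. Unset Printing Implicit Defensive.
Import Order.TTheory GRing.Theory Num.Theory.
Import numFieldNormedType.Exports.
Local Open Scope classical_set_scope.
Local Open Scope ring_scope.

Section Defs.
Context {R : realType} {X : normedModType R}.

Definition bnd (B : set X) : Prop := exists M : R, forall x, B x -> `|x| <= M.

Definition weak_cvg (u : nat -> X) (y : X) : Prop :=
  forall f : X -> R,
    (forall a b, f (a + b) = f a + f b) ->
    (forall (k : R) a, f (k *: a) = k * f a) ->
    continuous f ->
    f (u n) @[n --> \oo] --> f y.

Definition hdist (A C : set X) : \bar R :=
  ereal_sup [set ereal_inf [set (`|a - c|)%:E | c in C] | a in A].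

Definition diam (A : set X) : \bar R :=
  ereal_sup [set (`|x - y|)%:E | x in A & y in A].

Definition kuratowski (A : set X) : \bar R :=
  ereal_inf [set d%:E | d in [set d : R | 0 < d /\
     exists (n : nat) (U : nat -> set X),
       A `<=` \bigcup_(i in [set i | (i < n)%N]) U i /\
       (forall i, (i < n)%N -> (diam (U i) < d%:E)%E)]].

End Defs.

Section Dyn.
Context {R : realType} {X : normedModType R} {Sigma : Type}.
Variables (theta : R -> Sigma -> Sigma) (phi : R -> Sigma -> X -> X).

Definition is_group_flow : Prop :=
  (forall t, bijective (theta t)) /\
  theta 0 = id /\ (forall t s, theta (t + s) = theta t \o theta s).

Definition is_cocycle : Prop :=
  (forall s x, phi 0 s x = x) /\
  (forall t u s x, 0 <= t -> 0 <= u ->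
     phi (u + t) s x = phi u (theta t s) (phi t s x)).

Definition norm_to_weak : Prop :=
  forall t s (v : nat -> X) x, 0 <= t ->
    v n @[n --> \oo] --> x ->
    weak_cvg (fun n => phi t s (v n)) (phi t s x).

Definition pullback_absorbing (Bs : Sigma -> set X) : Prop :=
  (forall s, bnd (Bs s)) /\
  (forall s (B : set X), bnd B -> exists T : R, 0 <= T /\
     forall t, T <= t -> phi t (theta (- t) s) @` B `<=` Bs s).

Definition nested (Bs : Sigma -> set X) : Prop :=
  forall t s, 0 <= t -> Bs (theta (- t) s) `<=` Bs s.

Definition pullback_attractor (A : Sigma -> set X) : Prop :=
  (forall s, A s !=set0 /\ compact (A s)) /\
  (forall t s, 0 <= t -> phi t s @` A s = A (theta t s)) /\
  (forall s (B : set X), bnd B ->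
     forall e : R, 0 < e -> \forall t \near +oo,
       (hdist (phi t (theta (- t) s) @` B) (A s) <= e%:E)%E).

Definition kappa_contracting : Prop :=
  forall (e : R) s (B : set X), 0 < e -> bnd B -> exists T : R, 0 <= T /\
    forall t, T <= t -> (kuratowski (phi t (theta (- t) s) @` B) <= e%:E)%E.

Definition asymptotically_compact : Prop :=
  forall s (v : nat -> X) (tn : nat -> R),
    bnd (range v) -> (forall n, 0 <= tn n) -> tn n @[n --> \oo] --> +oo ->
    precompact (range (fun n => phi (tn n) (theta (- tn n) s) (v n))).

End Dyn.

(* A late pullback image of a bounded set lies, by absorption and nestedness,
   in the pullback image at a fixed time of the absorbing set.  Hence
   (b) -> (c): that image has a small Kuratowski measure, so a pullback
   sequence with times tending to infinity is totally bounded, hence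
   precompact since X is complete; (c) -> (b): otherwise the images at integer
   times contain a uniformly separated sequence, which has no cluster point.
   (a) -> (b): a finite net of the compact attractor is a net of every late
   pullback image.  (c) -> (a): the attractor is the set of cluster points of
   pullback sequences of bounded sequences; asymptotic compactness makes it
   nonempty, compact and attracting, and norm-to-weak continuity makes it
   invariant, because a weak limit and a strong cluster point of the same
   sequence coincide: continuous linear functionals separate points
   (Hahn-Banach, by Zorn's lemma on norm-dominated partial graphs). *)

From HB Require Import structures.
From mathcomp Require Import all_boot all_order all_algebra.
From mathcomp Require Import all_classical all_reals all_analysis.
From mathcomp Require Import lra.
Import Order.TTheory GRing.Theory Num.Theory.
Import numFieldNormedType.Exports.
Set Implicit Arguments. Unset Strict Implicit. Unset Printing Implicit Defensive.
Local Open Scope classical_set_scope.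
Local Open Scope ring_scope.

Section HahnBanach.
Context {R : realType} {X : normedModType R}.

Definition norm_dominated_graph (G : set (X * R)) :=
  [/\ (forall x r r', G (x, r) -> G (x, r') -> r = r'),
      (forall x r y s, G (x, r) -> G (y, s) -> G (x + y, r + s)),
      (forall k x r, G (x, r) -> G (k *: x, k * r)) &
      (forall x r, G (x, r) -> r <= `|x|)].

Lemma norm_dominated_graph00 G x r :
  norm_dominated_graph G -> G (x, r) -> G (0, 0).
Proof. by move=> [_ _ GZ _] /(GZ 0); rewrite scale0r mul0r. Qed.

Lemma norm_dominated_graphB G x r y s : norm_dominated_graph G ->
  G (x, r) -> G (y, s) -> G (x - y, r - s).
Proof.
move=> [_ GD GZ _] Gx /(GZ (-1)); rewrite scaleN1r mulN1r; exact: GD.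
Qed.

(* The empty set is admitted so that the union of the empty chain is a
   candidate, as Zorn_bigcup requires. *)
Definition norming_graph (a : X) (G : set (X * R)) :=
  G = set0 \/ (norm_dominated_graph G /\ G (a, `|a|)).

Lemma norming_graph_bigcup a (F : set (set (X * R))) :
  F `<=` norming_graph a -> total_on F subset ->
  norming_graph a (\bigcup_(G in F) G).
Proof.
move=> Fa Ftot.
have [[G0 FG0 [q G0q]]|F0] := pselect (exists2 G, F G & G !=set0); last first.
  left; apply/seteqP; split=> // p [G FG Gp].
  by apply: F0; exists G => //; exists p.
have dominated G p : F G -> G p -> norm_dominated_graph G.
  by move=> /Fa[->//|[]].
have common G1 G2 p1 p2 : F G1 -> F G2 -> G1 p1 -> G2 p2 ->
    exists G, [/\ F G, G p1 & G p2].
  move=> F1 F2 G1p G2p; have [G12|G21] := Ftot _ _ F1 F2.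
    by exists G2; split=> //; apply: G12.
  by exists G1; split=> //; apply: G21.
right; split; last by exists G0 => //; case: (Fa _ FG0) G0q => [->//|[]].
split.
- move=> x r r' [G1 F1 G1x] [G2 F2 G2x].
  have [G [FG Gr Gr']] := common _ _ _ _ F1 F2 G1x G2x.
  by have [Gfun _ _ _] := dominated _ _ FG Gr; exact: Gfun Gr Gr'.
- move=> x r y s [G1 F1 G1x] [G2 F2 G2y].
  have [G [FG Gx Gy]] := common _ _ _ _ F1 F2 G1x G2y.
  by have [_ GD _ _] := dominated _ _ FG Gx; exists G => //; exact: GD.
- move=> k x r [G FG Gx].
  by have [_ _ GZ _] := dominated _ _ FG Gx; exists G => //; exact: GZ.
- move=> x r [G FG Gx].
  by have [_ _ _ Gle] := dominated _ _ FG Gx; exact: Gle.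
Qed.

Definition graph_extension (A : set (X * R)) (x0 : X) (c : R) :=
  [set p | exists y r l, A (y, r) /\ p = (y + l *: x0, r + l * c)].

(* The admissible values at [x0] form the interval between
   [sup (r - |y - x0|)] and [inf (|y' + x0| - r')], which is nonempty by the
   triangle inequality [|y + y'| <= |y - x0| + |y' + x0|]. *)
Lemma extension_value_exists A x0 : norm_dominated_graph A -> A (0, 0) ->
  exists c, (forall y r, A (y, r) -> r - `|y - x0| <= c) /\
            (forall y r, A (y, r) -> c <= `|y + x0| - r).
Proof.
move=> [_ AD _ Ale] A00.
pose E := [set z | exists y r, A (y, r) /\ z = r - `|y - x0|].
have compatible y r y' r' : A (y, r) -> A (y', r') ->
    r - `|y - x0| <= `|y' + x0| - r'.
  move=> Ay Ay'; have := Ale _ _ (AD _ _ _ _ Ay Ay').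
  have : `|y + y'| <= `|y - x0| + `|y' + x0|.
    have -> : y + y' = (y - x0) + (y' + x0) by rewrite addrACA addNr addr0.
    exact: ler_normD.
  lra.
have E0 : E !=set0 by exists (0 - `|0 - x0|); exists 0, 0.
have Eub : ubound E (`|0 + x0| - 0) by move=> _ [y [r [Ay ->]]]; exact: compatible.
have supE : has_sup E by split=> //; exists (`|0 + x0| - 0).
exists (sup E); split=> [y r Ay|y r Ay].
  by apply: sup_upper_bound => //; exists y, r.
by apply: ge_sup => // _ [y' [r' [Ay' ->]]]; exact: compatible.
Qed.

Lemma graph_extension_dominated A x0 c : norm_dominated_graph A ->
  (forall y r, A (y, r) -> r - `|y - x0| <= c) ->
  (forall y r, A (y, r) -> c <= `|y + x0| - r) ->
  forall x s, graph_extension A x0 c (x, s) -> s <= `|x|.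
Proof.
move=> [_ _ AZ Ale] lower upper _ _ [y [r [l [Ay [-> ->]]]]].
have [l0|l0|->] := ltgtP l 0; last by rewrite scale0r mul0r !addr0; exact: Ale.
- have Nl0 : 0 < - l by rewrite oppr_gt0.
  have := lower _ _ (AZ (- l)^-1 _ _ Ay).
  have -> : (- l)^-1 *: y - x0 = (- l)^-1 *: (y + l *: x0).
    by rewrite scalerDr scalerA invrN mulNr mulVf ?lt_eqF // scaleN1r.
  rewrite normrZ gtr0_norm ?invr_gt0 // => h.
  have := ler_wpM2l (ltW Nl0) h.
  rewrite mulrBr !mulrA mulfV ?gt_eqF // !mul1r; lra.
- have := upper _ _ (AZ l^-1 _ _ Ay).
  have -> : l^-1 *: y + x0 = l^-1 *: (y + l *: x0).
    by rewrite scalerDr scalerA mulVf ?gt_eqF // scale1r.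
  rewrite normrZ gtr0_norm ?invr_gt0 // => h.
  have := ler_wpM2l (ltW l0) h.
  rewrite mulrBr !mulrA mulfV ?gt_eqF // !mul1r; lra.
Qed.

Lemma norm_dominated_graph_extension A x0 c :
  norm_dominated_graph A -> ~ (exists r, A (x0, r)) ->
  (forall y r, A (y, r) -> r - `|y - x0| <= c) ->
  (forall y r, A (y, r) -> c <= `|y + x0| - r) ->
  norm_dominated_graph (graph_extension A x0 c).
Proof.
move=> domA Ax0 lower upper; have [Afun AD AZ _] := domA.
split; last exact: graph_extension_dominated.
- move=> x s s' [y [r [l [Ay [-> ->]]]]] [y' [r' [l' [Ay' [eq_x ->]]]]].
  have [ll'|ll'] := eqVneq l l'.
    subst l'; have eq_y : y = y' by apply: (addIr (l *: x0)).
    by subst y'; rewrite (Afun _ _ _ Ay Ay').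
  (* otherwise x0 would lie in the domain of A *)
  exfalso; apply: Ax0; exists ((l - l')^-1 * (r' - r)).
  have x0E : x0 = (l - l')^-1 *: (y' - y).
    apply: (scalerI (_ : l - l' != 0)); first by rewrite subr_eq0.
    rewrite scalerA mulfV ?subr_eq0 // scale1r scalerBl.
    have -> : l *: x0 = y' + l' *: x0 - y by rewrite -eq_x addrAC subrr add0r.
    by rewrite addrAC addrK.
  by rewrite x0E; apply: AZ; exact: norm_dominated_graphB.
- move=> _ _ _ _ [y [r [l [Ay [-> ->]]]]] [y' [r' [l' [Ay' [-> ->]]]]].
  exists (y + y'), (r + r'), (l + l'); split; first exact: AD.
  by rewrite scalerDl mulrDl [in X in (X, _)]addrACA [in X in (_, X)]addrACA.
- move=> k _ _ [y [r [l [Ay [-> ->]]]]].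
  exists (k *: y), (k * r), (k * l); split; first exact: AZ.
  by rewrite scalerDr scalerA mulrDr mulrA.
Qed.

Lemma norm_dominated_line (a : X) : a != 0 ->
  norm_dominated_graph [set p | exists k : R, p = (k *: a, k * `|a|)].
Proof.
move=> a0; split.
- move=> _ r r' [k [-> ->]] [k' [eq_ka ->]].
  move/eqP: eq_ka; rewrite -subr_eq0 -scalerBl scaler_eq0 (negbTE a0) orbF.
  by rewrite subr_eq0 => /eqP ->.
- move=> _ _ _ _ [k [-> ->]] [k' [-> ->]].
  by exists (k + k'); rewrite scalerDl mulrDl.
- by move=> k _ _ [k' [-> ->]]; exists (k * k'); rewrite scalerA mulrA.
- move=> _ _ [k [-> ->]]; rewrite normrZ ler_wpM2r //; exact: ler_norm.
Qed.

Lemma norming_functional_exists (a : X) : a != 0 -> exists f : X -> R,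
  [/\ (forall u v, f (u + v) = f u + f v),
      (forall (k : R) u, f (k *: u) = k * f u),
      continuous f & f a != 0].
Proof.
move=> a0.
have [A [Aa Amax]] := Zorn_bigcup (@norming_graph_bigcup a).
pose line : set (X * R) := [set p | exists k : R, p = (k *: a, k * `|a|)].
have line_a : line (a, `|a|) by exists 1; rewrite scale1r mul1r.
have [A0|[domA Aaa]] := Aa.
  exfalso; apply: (Amax line); last by right; split; first exact: norm_dominated_line.
  by rewrite A0; split; [exact: sub0set | move=> /(_ _ line_a)].
have A00 := norm_dominated_graph00 domA Aaa.
have Atotal x0 : exists r, A (x0, r).
  apply: contrapT => Ax0.
  have [c [lower upper]] := extension_value_exists x0 domA A00.
  have extA := norm_dominated_graph_extension domA Ax0 lower upper.
  have A_ext : A `<=` graph_extension A x0 c.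
    by move=> [y r] Ay; exists y, r, 0; rewrite scale0r mul0r !addr0.
  apply: (Amax (graph_extension A x0 c)); last by right; split=> //; exact: A_ext.
  split=> // extA_sub; apply: Ax0; exists c; apply: extA_sub.
  by exists 0, 0, 1; rewrite scale1r mul1r !add0r.
have [Afun AD AZ Ale] := domA.
pose f x := xget 0 [set r | A (x, r)].
have Af x : A (x, f x) := xgetPex 0 (Atotal x).
have fD u v : f (u + v) = f u + f v by apply: Afun (Af _) (AD _ _ _ _ (Af u) (Af v)).
have fZ k u : f (k *: u) = k * f u by apply: Afun (Af _) (AZ _ _ _ (Af u)).
have fB u v : f (u - v) = f u - f v by rewrite fD -scaleN1r fZ mulN1r.
have f_le u : `|f u| <= `|u|.
  rewrite ler_norml Ale ?Af // andbT lerNl.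
  by have := Ale _ _ (Af (- u)); rewrite -scaleN1r fZ normrZ normrN1 mul1r mulN1r.
exists f; split=> //.
- move=> x; apply/cvgrPdist_lt => e e0; near=> y.
  rewrite -fB; apply: le_lt_trans (f_le _) _.
  by near: y; exact: (@cvgr_dist_lt _ _ _ (nbhs x) _ id x (@cvg_id _ _)).
- by rewrite (Afun _ _ _ (Af a) Aaa) normr_eq0.
Unshelve. all: by end_near.
Qed.

Lemma linear_functionals_separate (a b : X) :
  (forall f : X -> R, (forall u v, f (u + v) = f u + f v) ->
     (forall (k : R) u, f (k *: u) = k * f u) -> continuous f -> f a = f b) ->
  a = b.
Proof.
move=> fab; apply/eqP; rewrite -subr_eq0; apply: contraT => /norming_functional_exists.
move=> [f [fD fZ fc]]; rewrite fD -scaleN1r fZ mulN1r (fab f fD fZ fc) subrr.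
by rewrite eqxx.
Qed.

End HahnBanach.

Lemma cvgn_ge_id (g : nat -> nat) : (forall k, (k <= g k)%N) -> g @ \oo --> \oo.
Proof.
move=> g_ge P [N _ PN]; exists N => // k /= Nk; apply: PN.
exact: leq_trans Nk (g_ge k).
Qed.

Lemma cvgry_addr {R : realType} (u : nat -> R) (c : R) :
  u n @[n --> \oo] --> +oo -> (u n + c) @[n --> \oo] --> +oo.
Proof.
move=> /cvgryPge u_oo; apply/cvgryPge => A.
by near do rewrite -lerBlDr; exact: u_oo.
Unshelve. all: by end_near.
Qed.

Section ClusterPoints.
Context {R : realType} {X : normedModType R}.

Definition cluster_point (u : nat -> X) (y : X) :=
  forall e, 0 < e -> forall N, exists2 n, (N <= n)%N & `|y - u n| < e.

Lemma cvg_cluster_point (u : nat -> X) y : u @ \oo --> y -> cluster_point u y.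
Proof.
move=> /cvgr_dist_lt uy e /uy [M _ HM] N.
by exists (maxn N M); [rewrite leq_maxl | apply: HM; rewrite /= leq_maxr].
Qed.

Lemma cluster_point_subseq (u : nat -> X) y (P : nat -> Prop) N0 :
  cluster_point u y -> (forall n, (N0 <= n)%N -> P n) ->
  exists g : nat -> nat,
    [/\ forall k, (k <= g k)%N, forall k, P (g k) & u \o g @ \oo --> y].
Proof.
move=> uy P_ge.
have close k : exists n, [/\ (k <= n)%N, P n & `|y - u n| < k.+1%:R^-1].
  have k0 : 0 < k.+1%:R^-1 :> R by rewrite invr_gt0.
  have [n kN0n yn] := uy _ k0 (maxn k N0).
  rewrite geq_max in kN0n; case/andP: kN0n => kn N0n.
  by exists n; split=> //; exact: P_ge.
have [g g_close] := choice close.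
exists g; split=> [k|k|]; try by case: (g_close k).
apply/cvgrPdist_lt => e e0; near=> k.
have [_ _ /lt_trans] := g_close k; apply.
by near: k; exact: (near_infty_natSinv_lt (PosNum e0)).
Unshelve. all: by end_near.
Qed.

Lemma weak_cvg_cluster_point (u : nat -> X) p q :
  weak_cvg u p -> cluster_point u q -> p = q.
Proof.
move=> up uq; apply: linear_functionals_separate => f fD fZ fc.
have fB a b : f (a - b) = f a - f b by rewrite fD -scaleN1r fZ mulN1r.
apply/eqP; rewrite -subr_eq0 -normr_le0; apply/ler_addgt0Pr => e e0.
rewrite add0r; have e2 : 0 < e / 2 by rewrite divr_gt0.
have [N _ fu_near] : \forall n \near \oo, `|f p - f (u n)| < e / 2.
  by apply: cvgr_dist_lt; [exact: up|].
have /nbhs_ballP[d d0 fq_near] : \forall a \near q, `|f q - f a| < e / 2.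
  by apply: cvgr_dist_lt; [exact: fc|].
have [n Nn qun] := uq _ d0 N.
have fqu : `|f q - f (u n)| < e / 2 by apply: fq_near; rewrite -ball_normE.
have -> : f p - f q = (f p - f (u n)) - (f q - f (u n)) by rewrite opprB addrA subrK.
rewrite (splitr e); apply: le_trans (ler_normB _ _) _.
by apply: ltW; rewrite ltrD //; exact: fu_near.
Qed.

Lemma precompact_range_cluster_point (u : nat -> X) :
  precompact (range u) -> exists y, cluster_point u y.
Proof.
rewrite precompactE => cK.
have [|y [_ cy]] := cK (u @ \oo) (fmap_proper_filter _ _).
  change (\oo [set n | closure (range u) (u n)]).
  by apply: filterE => n; apply: subset_closure; exists n.
exists y => e e0 N.
case: (cy [set u n | n in [set n | (N <= n)%N]] (ball y e)).
- change (\oo [set n | exists2 m, (N <= m)%N & u m = u n]).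
  by exists N => // n /= Nn; exists n.
- exact: nbhsx_ballx.
by move=> _ [[n Nn <-]]; rewrite -ball_normE /= => yun; exists n.
Qed.

Definition separated (u : nat -> X) (d : R) :=
  forall n m, n <> m -> d <= `|u n - u m|.

Lemma separated_not_precompact (u : nat -> X) d :
  0 < d -> separated u d -> ~ precompact (range u).
Proof.
move=> d0 u_sep /precompact_range_cluster_point [y uy].
have d2 : 0 < d / 2 by rewrite divr_gt0.
have [n _ yun] := uy _ d2 0%N.
have [m nm yum] := uy _ d2 n.+1.
have /u_sep : n <> m by move=> nm'; rewrite nm' ltnn in nm.
apply/negP; rewrite -ltNge.
have -> : u n - u m = (y - u m) - (y - u n).
  by rewrite opprB [RHS]addrC [RHS]addrA subrK.
by apply: le_lt_trans (ler_normB _ _) _; rewrite [d]splitr ltrD.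
Qed.

Definition finite_net (S : set X) (e : R) (l : seq X) :=
  forall x, S x -> exists2 c, c \in l & `|x - c| < e.

Definition totally_bounded (S : set X) :=
  forall e, 0 < e -> exists l, finite_net S e l.

(* Greedy construction: each new point avoids the finite net formed by the
   points already chosen. *)
Lemma separated_seq_of_no_finite_net (S : nat -> set X) d :
  (forall n l, ~ finite_net (S n) d l) ->
  exists u : nat -> X, (forall n, S n (u n)) /\ separated u d.
Proof.
move=> no_net.
have far n (l : seq X) : exists x, S n x /\ forall c, c \in l -> d <= `|x - c|.
  apply: contrapT => near_l; apply: (no_net n l) => x Sx.
  apply: contrapT => x_far; apply: near_l; exists x; split=> // c cl.
  by rewrite leNgt; apply/negP => xc; apply: x_far; exists c.
have [pick pickP] := choice (fun nl : nat * seq X => far nl.1 nl.2).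
pose fix prefix n := if n is n'.+1 then pick (n', prefix n') :: prefix n' else [::].
exists (fun n => pick (n, prefix n)); split=> [n|]; first by case: (pickP (n, prefix n)).
have in_prefix m n : (m < n)%N -> pick (m, prefix m) \in prefix n.
  elim: n => // n IHn; rewrite ltnS leq_eqVlt in_cons => /orP[/eqP->|mn].
    by rewrite eqxx.
  by rewrite IHn ?orbT.
have sep_lt m n : (m < n)%N -> d <= `|pick (n, prefix n) - pick (m, prefix m)|.
  by move=> mn; case: (pickP (n, prefix n)) => _; apply; exact: in_prefix.
move=> n m /eqP; rewrite neq_ltn => /orP[nm|mn]; last exact: sep_lt.
by rewrite distrC; exact: sep_lt.
Qed.

Lemma compact_totally_bounded (K : set X) : compact K -> totally_bounded K.
Proof.
rewrite compact_cover => cK e e0.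
have K_cover : K `<=` cover K (fun c => ball c e).
  by move=> x Kx; exists x => //; exact: ballxx.
have [D _ D_cover] := cK X K _ (fun _ _ => @ball_open _ _ _ _) K_cover.
exists (finmap.enum_fset D) => x /D_cover [c /= cD xc]; exists c => //.
by move: xc; rewrite -ball_normE /= distrC.
Qed.

Lemma ultra_finite_net T (F : set_system T) (P : X -> set T) (l : seq X) :
  UltraFilter F -> F [set x | exists2 c, c \in l & P c x] -> exists c, F (P c).
Proof.
move=> UF; elim: l => [|c l IHl] Fl.
  have : F set0 by apply: filterS Fl => x [].
  by move/filter_ex => [].
have [Fc|FnC] := in_ultra_setVsetC (P c) UF; first by exists c.
apply: IHl; apply: filterS (filterI Fl FnC) => x [[c']].
by rewrite in_cons => /orP[/eqP -> //|c'l Pc' _]; exists c'.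
Qed.

End ClusterPoints.

Lemma totally_bounded_precompact {R : realType} {X : completeNormedModType R}
  (S : set X) : totally_bounded S -> precompact S.
Proof.
move=> tbS; rewrite precompactE compact_ultra => F UF F_clS.
have PF : ProperFilter F by exact: ultra_proper.
have F_cauchy : cauchy F.
  apply: cauchy_exP => e e0.
  have [l S_net] := tbS _ (divr_gt0 e0 (ltr0Sn R 1)).
  apply: (ultra_finite_net (P := fun c => ball c e) (l := l) UF).
  apply: filterS F_clS => x clSx.
  have [s [Ss xs]] := clSx _ (nbhsx_ballx x (e / 2) (divr_gt0 e0 (ltr0Sn R 1))).
  have [c cl sc] := S_net s Ss; exists c => //.
  rewrite -ball_normE /=.
  have -> : c - x = - (s - c) + (s - x) by rewrite opprB addrA subrK.
  apply: le_lt_trans (ler_normD _ _) _; rewrite normrN [e]splitr ltrD //.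
  by move: xs; rewrite -ball_normE /= distrC.
have F_cvg := @cauchy_cvg X F PF F_cauchy.
exists (lim F); split=> //.
have -> : closure S = closure (closure S) by apply/closure_id; exact: closed_closure.
move=> B /F_cvg FB.
by have [z [? ?]] := filter_ex (filterI F_clS FB); exists z.
Qed.

Section Kuratowski.
Context {R : realType} {X : normedModType R}.
Local Open Scope ereal_scope.

Lemma diam_le (A : set X) (r : R) :
  (forall x y, A x -> A y -> (`|x - y| <= r)%R) -> diam A <= r%:E.
Proof.
move=> Ar; apply/ereal_supP => _ [x Ax [y Ay <-]].
by rewrite lee_fin; exact: Ar.
Qed.

Lemma le_diam (A : set X) x y : A x -> A y -> (`|x - y|)%:E <= diam A.
Proof. by move=> Ax Ay; apply: ereal_sup_ubound; exists x => //; exists y. Qed.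

(* Balls of radius [r] have diameter at most [2 r < 3 r]. *)
Lemma kuratowski_le_finite_net (S : set X) (l : seq X) (r : R) :
  (0 < r)%R -> finite_net S r l -> kuratowski S <= (3 * r)%:E.
Proof.
move=> r0 S_net; apply: ereal_inf_lbound; exists (3 * r)%R => //.
split; first by rewrite mulr_gt0.
exists (size l), (fun i => ball (nth 0%R l i) r); split.
  move=> x /S_net [c cl xc]; exists (index c l); first by rewrite /= index_mem.
  by rewrite nth_index // -ball_normE /= distrC.
move=> i _; apply: le_lt_trans (diam_le (r := (2 * r)%R) _) _.
  move=> x y; rewrite -!ball_normE /= => cx cy.
  have -> : (x - y = - (nth 0%R l i - x) + (nth 0%R l i - y))%R.
    by rewrite opprB addrA subrK.
  apply: le_trans (ler_normD _ _) _; rewrite normrN.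
  by rewrite mulr2n mulrDl mul1r ltW // ltrD.
by rewrite lte_fin ltr_pM2r // ltr_nat.
Qed.

Lemma le_kuratowski (A B : set X) : A `<=` B -> kuratowski A <= kuratowski B.
Proof.
move=> AB; apply: ereal_inf_le_tmp => _ [d [d0 [n [U [cov dU]]]] <-].
by exists d => //; split=> //; exists n, U; split=> //; exact: subset_trans cov.
Qed.

Lemma finite_net_of_kuratowski_lt (S : set X) (e : R) :
  kuratowski S < e%:E -> exists l, finite_net S e l.
Proof.
move=> /ereal_inf_ltP [_ [d [d0 [n [U [cov dU]]]] <-]]; rewrite lte_fin => de.
exists [seq xget 0%R (U i) | i <- iota 0 n] => x /cov [i /= ilt Ux].
exists (xget 0%R (U i)); first by apply/mapP; exists i; rewrite ?mem_iota.
have Uc : U i (xget 0%R (U i)) by exact: xgetI Ux.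
have := le_lt_trans (le_diam Ux Uc) (dU _ ilt).
by rewrite lte_fin => /lt_trans; apply.
Qed.

End Kuratowski.

Lemma bnd_range_sub {R : realType} {X : normedModType R} (v : nat -> X) (B : set X) :
  bnd B -> (forall n, B (v n)) -> bnd (range v).
Proof. by move=> [M BM] Bv; exists M => _ [n _ <-]; exact: BM. Qed.

Section Pullback.
Context {R : realType} {X : completeNormedModType R} {Sigma : Type}.
Variables (theta : R -> Sigma -> Sigma) (phi : R -> Sigma -> X -> X).
Variable Bs : Sigma -> set X.
Hypotheses (flow : is_group_flow theta) (cocycle : is_cocycle theta phi).
Hypotheses (absorbing : pullback_absorbing theta phi Bs) (nest : nested theta Bs).

Definition pullback t sg x := phi t (theta (- t) sg) x.

Lemma thetaD a b sg : theta (a + b) sg = theta a (theta b sg).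
Proof. by case: flow => _ [_ ->]. Qed.

Lemma theta0 sg : theta 0 sg = sg.
Proof. by case: flow => _ [-> _]. Qed.

Lemma pullback_factor s t sg x : 0 <= s -> s <= t ->
  pullback t sg x = pullback s sg (phi (t - s) (theta (- t) sg) x).
Proof.
move=> s_ge0 st; have [_ phiD] := cocycle; rewrite /pullback.
have -> : theta (- s) sg = theta (t - s) (theta (- t) sg).
  by rewrite -thetaD addrAC subrr add0r.
by rewrite -phiD ?subr_ge0 // addrC subrK.
Qed.

Lemma phi_pullback t s sg x : 0 <= t -> 0 <= s ->
  phi t sg (pullback s sg x) = pullback (t + s) (theta t sg) x.
Proof.
move=> t_ge0 s_ge0; have [_ phiD] := cocycle; rewrite /pullback.
have -> : theta (- (t + s)) (theta t sg) = theta (- s) sg.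
  by rewrite -thetaD opprD addrAC addNr add0r.
by rewrite phiD // -thetaD subrr theta0.
Qed.

(* The intermediate state [phi (t - s) (theta (- t) sg) x] is the image of
   [B] after time [t - s] pulled back to the fibre [theta (- s) sg], hence lies
   in [Bs (theta (- s) sg)], which nestedness puts inside [Bs sg]. *)
Lemma pullback_absorbed sg B s : bnd B -> 0 <= s -> exists T, 0 <= T /\
  forall t x, s + T <= t -> B x ->
    exists z, Bs sg z /\ pullback t sg x = pullback s sg z.
Proof.
move=> B_bnd s_ge0; have [T [T_ge0 absorbT]] := absorbing.2 (theta (- s) sg) B B_bnd.
exists T; split=> // t x sTt Bx.
have st : s <= t by apply: le_trans sTt; rewrite lerDl.
exists (phi (t - s) (theta (- t) sg) x); split; last exact: pullback_factor.
apply: (nest s_ge0); apply: (absorbT (t - s)); first by rewrite lerBrDl.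
by exists x => //; rewrite -thetaD opprB addrAC subrr add0r.
Qed.

Lemma kappa_contracting_asymptotically_compact :
  kappa_contracting theta phi -> asymptotically_compact theta phi.
Proof.
move=> kappa sg v tn v_bnd _ tn_oo; apply: totally_bounded_precompact => e e0.
have [T [T_ge0 kappaT]] := kappa (e / 2) sg (Bs sg) (divr_gt0 e0 (ltr0Sn R 1))
  (absorbing.1 sg).
have : (kuratowski (pullback T sg @` Bs sg) < e%:E)%E.
  apply: le_lt_trans (kappaT T (lexx _)) _.
  by rewrite lte_fin ltr_pdivrMr // ltr_pMr // ltr1n.
move=> /finite_net_of_kuratowski_lt [l BT_net].
have [T' [_ absorbed]] := pullback_absorbed sg v_bnd T_ge0.
have [N _ tn_ge] := cvgry_ge tn_oo (T + T').
(* the first [N] points are their own net; the others lie in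
   [pullback T sg @` Bs sg] *)
exists ([seq pullback (tn n) sg (v n) | n <- iota 0 N] ++ l) => _ [n _ <-].
have [nN|Nn] := ltnP n N.
  exists (pullback (tn n) sg (v n)); last by rewrite subrr normr0.
  by rewrite mem_cat; apply/orP; left; apply/mapP; exists n; rewrite ?mem_iota.
have [z [Bz vz]] := absorbed (tn n) (v n) (tn_ge n Nn) (ex_intro2 _ _ n I erefl).
have [c cl zc] := BT_net (pullback T sg z) (ex_intro2 _ _ z Bz erefl).
by exists c; [rewrite mem_cat cl orbT | rewrite -/(pullback _ _ _) vz].
Qed.

Lemma asymptotically_compact_kappa_contracting :
  asymptotically_compact theta phi -> kappa_contracting theta phi.
Proof.
move=> asymp e sg B e0 B_bnd.
have e3 : 0 < e / 3 by rewrite divr_gt0.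
suff [n kappa_n] : exists n : nat,
    (kuratowski (pullback n%:R sg @` Bs sg) <= e%:E)%E.
  have [T [T_ge0 absorbed]] := pullback_absorbed sg B_bnd (ler0n _ n).
  exists (n%:R + T); split; first by rewrite addr_ge0.
  move=> t tT; apply: le_trans kappa_n; apply: le_kuratowski => _ [x Bx <-].
  by have [z [Bz xz]] := absorbed t x tT Bx; exists z; last exact: esym xz.
apply: contrapT => kappa_large.
have [u [u_in u_sep]] : exists u, (forall n, (pullback n%:R sg @` Bs sg) (u n)) /\
    separated u (e / 3).
  apply: (@separated_seq_of_no_finite_net _ _ (fun n => pullback n%:R sg @` Bs sg)).
  move=> n l l_net; apply: kappa_large.
  exists n; have -> : e = 3 * (e / 3) by rewrite mulrC divfK.
  exact: kuratowski_le_finite_net e3 l_net.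
have /choice[z zP] n : exists z, Bs sg z /\ pullback n%:R sg z = u n.
  by have [z Bz uz] := u_in n; exists z.
have z_bnd : bnd (range z).
  by apply: bnd_range_sub (absorbing.1 sg) _ => n; case: (zP n).
apply: (separated_not_precompact e3 u_sep).
have -> : u = fun n => pullback n%:R sg (z n) by apply: funext => n; case: (zP n).
exact: asymp sg z (fun n => n%:R) z_bnd (fun n => ler0n _ n) cvgr_idn.
Qed.

Lemma attractor_kappa_contracting A :
  pullback_attractor theta phi A -> kappa_contracting theta phi.
Proof.
move=> [A_cpt [_ A_attr]] e sg B e0 B_bnd.
pose r := e / 3; have r0 : 0 < r by rewrite divr_gt0.
have [l A_net] := compact_totally_bounded (A_cpt sg).2 (divr_gt0 r0 (ltr0Sn R 1)).
have [M [_ M_attr]] := A_attr sg B B_bnd (r / 4) (divr_gt0 r0 (ltr0Sn R 3)).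
exists (Num.max (M + 1) 0); split; first by rewrite le_max lexx orbT.
move=> t Mt; have Mt' : M < t by apply: lt_le_trans Mt; rewrite lt_max ltrDl ltr01.
have -> : e = 3 * r by rewrite /r mulrC divfK.
apply: (kuratowski_le_finite_net (l := l) r0) => _ [x Bx <-].
set a := phi t (theta (- t) sg) x.
have : (ereal_inf [set (`|a - c|)%:E | c in A sg] < (r / 2)%:E)%E.
  apply: le_lt_trans (le_trans _ (M_attr t Mt')) _.
    by apply: ereal_sup_ubound; exists a => //; exists x.
  by rewrite lte_fin; lra.
move=> /ereal_inf_ltP [_ [c Ac <-]]; rewrite lte_fin => ac.
have [c' c'l cc'] := A_net c Ac.
exists c' => //; have -> : a - c' = (a - c) + (c - c') by rewrite addrA subrK.
by apply: le_lt_trans (ler_normD _ _) _; rewrite [r]splitr ltrD.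
Qed.

Definition omega_limit sg y := exists (v : nat -> X) (tn : nat -> R),
  [/\ bnd (range v), (forall n, 0 <= tn n), tn n @[n --> \oo] --> +oo &
      cluster_point (fun n => pullback (tn n) sg (v n)) y].

Lemma omega_limit_near_absorbing sg y s e : omega_limit sg y -> 0 <= s -> 0 < e ->
  exists z, Bs sg z /\ `|y - pullback s sg z| < e.
Proof.
move=> [v [tn [v_bnd _ tn_oo vy]]] s_ge0 e0.
have [T [_ absorbed]] := pullback_absorbed sg v_bnd s_ge0.
have [N _ tn_ge] := cvgry_ge tn_oo (s + T).
have [n Nn yn] := vy e e0 N.
have [z [Bz vz]] := absorbed (tn n) (v n) (tn_ge n Nn) (ex_intro2 _ _ n I erefl).
by exists z; rewrite -vz.
Qed.

Section AsymptoticallyCompact.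
Hypothesis asymp : asymptotically_compact theta phi.

Lemma omega_limit_cluster_point sg v tn : bnd (range v) ->
  (forall n, 0 <= tn n) -> tn n @[n --> \oo] --> +oo ->
  exists y, cluster_point (fun n => pullback (tn n) sg (v n)) y /\ omega_limit sg y.
Proof.
move=> v_bnd tn_ge0 tn_oo.
have [y vy] := precompact_range_cluster_point (asymp sg v_bnd tn_ge0 tn_oo).
by exists y; split=> //; exists v, tn.
Qed.

Lemma omega_limit_neq0 sg : omega_limit sg !=set0.
Proof.
have zero_bnd : bnd (range (fun _ : nat => 0 : X)).
  by exists 0 => _ [n _ <-]; rewrite normr0.
have [y [_ y_om]] := omega_limit_cluster_point sg zero_bnd (fun n => ler0n _ n) cvgr_idn.
by exists y.
Qed.

Lemma omega_limit_closed sg : closed (omega_limit sg).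
Proof.
move=> y y_cl.
have approx (k : nat) : exists z, Bs sg z /\ `|y - pullback k%:R sg z| < k.+1%:R^-1.
  have d0 : 0 < k.+1%:R^-1 / 2 :> R by rewrite divr_gt0 // invr_gt0.
  have [y' [y'_om]] := y_cl _ (nbhsx_ballx y _ d0).
  rewrite -ball_normE /= => yy'.
  have [z [Bz y'z]] := omega_limit_near_absorbing y'_om (ler0n _ k) d0.
  exists z; split=> //; apply: le_lt_trans (ler_distD y' _ _) _.
  by rewrite [X in _ < X]splitr ltrD.
have [z zP] := choice approx.
exists z, (fun n => n%:R); split.
- by apply: bnd_range_sub (absorbing.1 sg) _ => n; case: (zP n).
- by move=> n; exact: ler0n.
- exact: cvgr_idn.
- move=> e e0 N; have [M _ M_lt] := near_infty_natSinv_lt (PosNum e0).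
  exists (maxn N M); first by rewrite leq_maxl.
  by apply: lt_trans (zP _).2 (M_lt _ _); rewrite /= leq_maxr.
Qed.

Lemma omega_limit_totally_bounded sg : totally_bounded (omega_limit sg).
Proof.
move=> e e0; apply: contrapT => no_net.
have [y [y_om y_sep]] := @separated_seq_of_no_finite_net _ _
  (fun _ => omega_limit sg) e (fun _ l l_net => no_net (ex_intro _ l l_net)).
have e4 : 0 < e / 4 by rewrite divr_gt0.
have /choice[z zP] n : exists z, Bs sg z /\ `|y n - pullback n%:R sg z| < e / 4.
  exact: omega_limit_near_absorbing (y_om n) (ler0n _ n) e4.
have z_bnd : bnd (range z).
  by apply: bnd_range_sub (absorbing.1 sg) _ => n; case: (zP n).
apply: (@separated_not_precompact _ _ (fun n => pullback n%:R sg (z n)) (e / 2)).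
- by rewrite divr_gt0.
- move=> n m nm /=; have := y_sep n m nm.
  have := ler_distD (pullback n%:R sg (z n)) (y n) (y m).
  have := ler_distD (pullback m%:R sg (z m)) (pullback n%:R sg (z n)) (y m).
  have := (zP n).2; have := (zP m).2; rewrite (distrC (y m)); lra.
- exact: asymp sg z (fun n => n%:R) z_bnd (fun n => ler0n _ n) cvgr_idn.
Qed.

Lemma omega_limit_compact sg : compact (omega_limit sg).
Proof.
rewrite -precompact_closed; last exact: omega_limit_closed.
exact/totally_bounded_precompact/omega_limit_totally_bounded.
Qed.

Lemma omega_limit_attracts sg B e : bnd B -> 0 < e ->
  \forall t \near +oo,
    (hdist (phi t (theta (- t) sg) @` B) (omega_limit sg) <= e%:E)%E.
Proof.
move=> B_bnd e0; apply: contrapT => not_attr.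
have far (n : nat) : exists tx : R * X, [/\ n%:R <= tx.1, B tx.2 &
    forall a, omega_limit sg a -> e < `|pullback tx.1 sg tx.2 - a|].
  apply: contrapT => near_n; apply: not_attr; exists n%:R; split=> [|t nt].
    exact: num_real.
  rewrite leNgt; apply/negP => /ereal_sup_gtP [_ [_ [x Bx <-] <-]] ex.
  apply: near_n; exists (t, x); split=> //=; first exact: ltW.
  move=> a a_om; rewrite -lte_fin; apply: lt_le_trans ex _.
  by apply: ereal_inf_lbound; exists a.
have [tx txP] := choice far.
have t_ge0 n : 0 <= (tx n).1 by case: (txP n) => + _ _; exact: le_trans (ler0n _ n).
have t_oo : (tx n).1 @[n --> \oo] --> +oo.
  apply/cvgryPge => A; have [N _ N_ge] := cvgry_ge (@cvgr_idn R) A.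
  by exists N => // n /= Nn; case: (txP n) => + _ _; exact: le_trans (N_ge n Nn).
have x_bnd : bnd (range (fun n => (tx n).2)).
  by apply: bnd_range_sub B_bnd _ => n; case: (txP n).
have [y [xy y_om]] := omega_limit_cluster_point sg x_bnd t_ge0 t_oo.
have [n _ yn] := xy e e0 0%N.
case: (txP n) => _ _ /(_ y y_om); rewrite distrC => /(lt_trans yn).
by rewrite ltxx.
Qed.

Hypothesis ntw : norm_to_weak phi.

(* Invariance: a pullback orbit converges weakly after applying [phi t] by
   norm-to-weak continuity, and strongly along a subsequence by asymptotic
   compactness; the two limits agree. *)
Lemma phi_omega_limit_sub t sg : 0 <= t ->
  phi t sg @` omega_limit sg `<=` omega_limit (theta t sg).
Proof.
move=> t_ge0 _ [y [v [tn [v_bnd tn_ge0 tn_oo vy]]] <-].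
have [g [g_ge _ vgy]] :=
  cluster_point_subseq (P := fun _ => True) (N0 := 0%N) vy (fun _ _ => I).
have vg_bnd : bnd (range (v \o g)).
  by apply: bnd_range_sub v_bnd _ => k; exists (g k).
have tg_ge0 k : 0 <= t + tn (g k) by rewrite addr_ge0.
have tg_oo : (t + tn (g k)) @[k --> \oo] --> +oo.
  under eq_fun do rewrite addrC.
  exact/cvgry_addr/(cvg_comp _ _ (cvgn_ge_id g_ge) tn_oo).
have [w [vw w_om]] := omega_limit_cluster_point (theta t sg) vg_bnd tg_ge0 tg_oo.
suff -> : phi t sg y = w by [].
apply: (weak_cvg_cluster_point (u := fun k => pullback (t + tn (g k)) (theta t sg) (v (g k)))); last exact: vw.
have <- : (fun k => phi t sg (pullback (tn (g k)) sg (v (g k)))) =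
    (fun k => pullback (t + tn (g k)) (theta t sg) (v (g k))).
  by apply: funext => k; rewrite phi_pullback.
exact: ntw t sg _ y t_ge0 vgy.
Qed.

Lemma omega_limit_sub_phi t sg : 0 <= t ->
  omega_limit (theta t sg) `<=` phi t sg @` omega_limit sg.
Proof.
move=> t_ge0 w [v [tn [v_bnd _ tn_oo vw]]].
have [N _ tn_ge] := cvgry_ge tn_oo t.
have [g [g_ge tg_ge vgw]] := cluster_point_subseq (P := fun n => t <= tn n) vw tn_ge.
have vg_bnd : bnd (range (v \o g)).
  by apply: bnd_range_sub v_bnd _ => k; exists (g k).
have tg_ge0 k : 0 <= tn (g k) - t by rewrite subr_ge0.
have tg_oo : (tn (g k) - t) @[k --> \oo] --> +oo.
  exact/cvgry_addr/(cvg_comp _ _ (cvgn_ge_id g_ge) tn_oo).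
have [y [vy y_om]] := omega_limit_cluster_point sg vg_bnd tg_ge0 tg_oo.
exists y => //.
have [h [h_ge _ vhy]] :=
  cluster_point_subseq (P := fun _ => True) (N0 := 0%N) vy (fun _ _ => I).
pose s k := pullback (tn (g (h k)) - t) sg (v (g (h k))).
have phi_s : (fun k => phi t sg (s k)) =
    (fun k => pullback (tn (g (h k))) (theta t sg) (v (g (h k)))).
  by apply: funext => k; rewrite /s phi_pullback // addrC subrK.
apply: (weak_cvg_cluster_point (u := fun k => phi t sg (s k))).
  exact: ntw t sg s y t_ge0 vhy.
rewrite phi_s; apply: cvg_cluster_point.
exact: cvg_comp _ _ (cvgn_ge_id h_ge) vgw.
Qed.

Lemma asymptotically_compact_attractor : pullback_attractor theta phi omega_limit.
Proof.
split; [|split].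
- by move=> sg; split; [exact: omega_limit_neq0 | exact: omega_limit_compact].
- move=> t sg t_ge0; apply/seteqP; split.
    exact: phi_omega_limit_sub.
  exact: omega_limit_sub_phi.
- by move=> sg B B_bnd e e0; exact: omega_limit_attracts.
Qed.

End AsymptoticallyCompact.
End Pullback.

Theorem theorem3p13 (R : realType) (X : completeNormedModType R) (Sigma : Type)
  (theta : R -> Sigma -> Sigma) (phi : R -> Sigma -> X -> X)
  (Bs : Sigma -> set X) :
  is_group_flow theta ->
  is_cocycle theta phi ->
  norm_to_weak phi ->
  pullback_absorbing theta phi Bs ->
  nested theta Bs ->
  ((exists A : Sigma -> set X, pullback_attractor theta phi A) <->
     kappa_contracting theta phi) /\
  (kappa_contracting theta phi <-> asymptotically_compact theta phi).
Proof.
move=> flow cocycle ntw absorbing nest.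
have kappa_asymp := kappa_contracting_asymptotically_compact flow cocycle absorbing nest.
have asymp_kappa := asymptotically_compact_kappa_contracting flow cocycle absorbing nest.
split; split=> //.
- by move=> [A]; exact: attractor_kappa_contracting.
- move=> /kappa_asymp asymp; exists (omega_limit theta phi).
  exact: asymptotically_compact_attractor flow cocycle absorbing nest asymp ntw.
Qed.
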